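(* Let $p,q,p',q'$ be idempotents in a unital ring $A$ with $p'\sim p$ and $q'\sim q$. Then $\operatorname{sr}(pAq)=1$ if and only if $\operatorname{sr}(p'Aq')=1$.
   Context: For idempotents $p,q$ in a unital ring $A$, $\operatorname{sr}(pAq)=1$ means: whenever $a\in pAq$, $x\in qAp$, $b\in pAp$ satisfy $ax+b=p$, there exist $y\in pAq$, $z\in qAp$ with $(a+by)z=p$. Idempotents $p,q$ are equivalent, $p\sim q$, if there exist $a\in pAq$, $b\in qAp$ with $ab=p$ and $ba=q$. *)

From mathcomp Require Import all_boot all_algebra.
Set Implicit Arguments. Unset Strict Implicit. Unset Printing Implicit Defensive.
Import GRing.Theory.
Local Open Scope ring_scope.

Definition idem (A : pzRingType) (e : A) : Prop := e * e = e.

(* Membership in the corner pAq, for idempotents p q: a \in pAq <-> p a q = a. *)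
Definition corner (A : pzRingType) (p q a : A) : Prop := p * a * q = a.

Definition sr1 (A : pzRingType) (p q : A) : Prop :=
  forall a x b : A, corner p q a -> corner q p x -> corner p p b ->
    a * x + b = p ->
    exists y z : A, corner p q y /\ corner q p z /\ (a + b * y) * z = p.

Definition idem_equiv (A : pzRingType) (p q : A) : Prop :=
  exists a b : A, corner p q a /\ corner q p b /\ a * b = p /\ b * a = q.

From mathcomp Require Import all_boot all_algebra.
Set Implicit Arguments. Unset Strict Implicit. Unset Printing Implicit Defensive.
Import GRing.Theory.
Local Open Scope ring_scope.

(* Equivalences u : p' ~ p and s : q' ~ q (with inverses v, t) conjugate the
   corners: c |-> v c s maps p'Aq' onto pAq with inverse c |-> u c t, and
   likewise c |-> t c u on q'Ap' and c |-> v c u on p'Ap'.  Transport the hypothesis [a' x' + b' = p'] to pAq,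
   apply sr(pAq) = 1 there, and transport the solution (y, z) back. *)

Section Corners.
Variable A : pzRingType.
Implicit Types p q r a b : A.

Lemma corner_idl p q a : idem p -> corner p q a -> p * a = a.
Proof. by move=> Hp Ha; rewrite -{1}Ha !mulrA Hp. Qed.

Lemma corner_idr p q a : idem q -> corner p q a -> a * q = a.
Proof. by move=> Hq Ha; rewrite -{1}Ha -!mulrA Hq mulrA. Qed.

Lemma corner_mul p q r a b :
  idem p -> idem r -> corner p q a -> corner q r b -> corner p r (a * b).
Proof.
move=> Hp Hr Ha Hb.
by rewrite /corner mulrA (corner_idl Hp Ha) -mulrA (corner_idr Hr Hb).
Qed.

Lemma idem_equiv_sym p q : idem_equiv p q -> idem_equiv q p.
Proof. by case=> [a [b [Ha [Hb [ab ba]]]]]; exists b, a. Qed.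

End Corners.

Section Transfer.
Variables (A : pzRingType) (p q p' q' u v s t : A).
Hypotheses (Hp : idem p) (Hq : idem q) (Hp' : idem p') (Hq' : idem q').
Hypotheses (Hu : corner p' p u) (Hv : corner p p' v) (uv : u * v = p') (vu : v * u = p).
Hypotheses (Hs : corner q' q s) (Ht : corner q q' t) (st : s * t = q') (ts : t * s = q).

Lemma sr1_transfer : sr1 p q -> sr1 p' q'.
Proof.
move=> srpq a' x' b' Ha' Hx' Hb' E.
have a'_r : a' * q' = a' := corner_idr Hq' Ha'.
have [y [z [Hy [Hz Eyz]]]] :
    exists y z, corner p q y /\ corner q p z /\ (v * a' * s + v * b' * u * y) * z = p.
  apply: (srpq _ (t * x' * u)).
  - exact: corner_mul (corner_mul Hp Hq' Hv Ha') Hs.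
  - exact: corner_mul (corner_mul Hq Hp' Ht Hx') Hu.
  - exact: corner_mul (corner_mul Hp Hp' Hv Hb') Hu.
  - have -> : v * a' * s * (t * x' * u) = v * (a' * x') * u.
      by rewrite !mulrA -(mulrA _ s t) st -(mulrA _ a' q') a'_r.
    by rewrite -mulrDl -mulrDr E (corner_idr Hp' Hv).
exists (u * y * t), (s * z * v); split; [|split].
- exact: corner_mul (corner_mul Hp' Hq Hu Hy) Ht.
- exact: corner_mul (corner_mul Hq' Hp Hs Hz) Hv.
- have -> : (a' + b' * (u * y * t)) * (s * z * v)
          = u * ((v * a' * s + v * b' * u * y) * z) * v.
    rewrite !mulrDl !mulrDr !mulrA -(mulrA u v) uv -(mulrA _ t s) ts.
    rewrite -(mulrA _ y q) (corner_idr Hq Hy) !mulrA uv.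
    by rewrite (corner_idl Hp' Ha') (corner_idl Hp' Hb') !mulrDl.
  by rewrite Eyz (corner_idr Hp Hu) uv.
Qed.

End Transfer.

Lemma sr1_of_idem_equiv (A : pzRingType) (p q p' q' : A) :
  idem p -> idem q -> idem p' -> idem q' ->
  idem_equiv p' p -> idem_equiv q' q -> sr1 p q -> sr1 p' q'.
Proof.
move=> Hp Hq Hp' Hq' [u [v [Hu [Hv [uv vu]]]]] [s [t [Hs [Ht [st ts]]]]].
exact: sr1_transfer Hp Hq Hp' Hq' Hu Hv uv vu Hs Ht st ts.
Qed.

Theorem lemma2 (A : pzRingType) (p q p' q' : A) :
  idem p -> idem q -> idem p' -> idem q' ->
  idem_equiv p' p -> idem_equiv q' q ->
  (sr1 p q <-> sr1 p' q').
Proof.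
move=> Hp Hq Hp' Hq' Ep Eq; split; first exact: sr1_of_idem_equiv.
by apply: sr1_of_idem_equiv => //; apply: idem_equiv_sym.
Qed.
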